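(* Assume $\delta>d$. Then for every $(z,w)\in A_p\times\mathbb{C}$, $$\limsup_{n\to\infty}\frac{1}{\delta^n}\log^+|Q_z^n(w)|\;\le\;\alpha\, G_p(z).$$
   Context: Let $p(z)=z^\delta+O(z^{\delta-1})$ be a monic polynomial of degree $\delta\ge 2$, and let $q(z,w)=b(z)w^d+(\text{terms of lower degree in } w)$ be a polynomial with $d=\deg_w q\ge 2$, where $b$ is a monic polynomial of degree $\gamma\ge 0$. Let $f(z,w)=(p(z),q(z,w))$ (a polynomial skew product). Write $q_z(w)=q(z,w)$ and $Q_z^n=q_{p^{n-1}(z)}\circ\cdots\circ q_{p(z)}\circ q_z$, so that $f^n(z,w)=(p^n(z),Q_z^n(w))$. Let $A_p=\{z\in\mathbb{C}: p^n(z)\to\infty\}$ and $G_p(z)=\lim_{n\to\infty}\delta^{-n}\log^+|p^n(z)|$ (the Green function of $p$). For $\delta>d$, define the rational number $$\alpha=\max\Big\{\frac{n_j}{\delta-m_j}\;:\; z^{n_j}w^{m_j}\text{ is a monomial appearing in } q \text{ with nonzero coefficient}\Big\}\ \ (\ge 0).$$ *)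

From Stdlib Require Import Reals List.
Open Scope R_scope.

Definition Cx : Type := (R * R)%type.
Definition Czero : Cx := (0, 0).
Definition Cone : Cx := (1, 0).
Definition Cadd (a b : Cx) : Cx := (fst a + fst b, snd a + snd b).
Definition Cmul (a b : Cx) : Cx :=
  (fst a * fst b - snd a * snd b, fst a * snd b + snd a * fst b).
Fixpoint Cpow (a : Cx) (n : nat) : Cx :=
  match n with O => Cone | S k => Cmul a (Cpow a k) end.
Definition Cnorm (a : Cx) : R := sqrt (fst a * fst a + snd a * snd a).

Fixpoint Csum (f : nat -> Cx) (n : nat) : Cx :=
  match n with O => f O | S k => Cadd (Csum f k) (f (S k)) end.

(* one-variable polynomial given by its coefficient list (constant term first) *)
Definition peval (l : list Cx) (z : Cx) : Cx :=
  fold_right (fun a acc => Cadd a (Cmul z acc)) Czero l.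

Definition monic_of_degree (l : list Cx) (delta : nat) : Prop :=
  length l = S delta /\ nth delta l Czero = Cone.

Definition qeval (c : nat -> nat -> Cx) (N d : nat) (z w : Cx) : Cx :=
  Csum (fun i => Csum (fun j => Cmul (c i j) (Cmul (Cpow z i) (Cpow w j))) d) N.

Fixpoint piter (pl : list Cx) (n : nat) (z : Cx) : Cx :=
  match n with O => z | S k => peval pl (piter pl k z) end.

(* Q_z^n(w) = q_{p^{n-1}(z)} o ... o q_z (w) *)
Fixpoint Qiter (pl : list Cx) (c : nat -> nat -> Cx) (N d : nat) (n : nat) (z w : Cx) : Cx :=
  match n with
  | O => w
  | S k => qeval c N d (piter pl k z) (Qiter pl c N d k z w)
  end.

Definition logplus (x : R) : R := Rmax 0 (ln x).

Definition in_escape_set (pl : list Cx) (z : Cx) : Prop :=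
  cv_infty (fun n => Cnorm (piter pl n z)).

Definition is_alpha (c : nat -> nat -> Cx) (delta : nat) (alpha : R) : Prop :=
  (forall i j, c i j <> Czero -> INR i / INR (delta - j) <= alpha) /\
  (exists i j, c i j <> Czero /\ alpha = INR i / INR (delta - j)).

Definition limsup_le (u : nat -> R) (L : R) : Prop :=
  forall eps, eps > 0 -> exists N0, forall n, (N0 <= n)%nat -> u n <= L + eps.

From Stdlib Require Import Reals List Lra Lia.
From Coquelicot Require Import Coquelicot.
Open Scope R_scope.

(* Write A_n = log+|Q_z^n(w)|, B_n = log+|p^n(z)| and D = delta.
   Bounding q(z,w) monomial by monomial, each monomial z^i w^j with nonzero
   coefficient satisfies i <= alpha (D - j), which gives the one-step estimate
     A_{n+1} <= K + alpha D B_n + d max(0, A_n - alpha B_n),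
   with K = log(1 + sum of |coefficients|).  Dividing by D^{n+1}, the excess
   m_n = max(0, A_n/D^n - alpha B_n/D^n) obeys m_{n+1} <= (d/D) m_n + o(1),
   because B_n/D^n converges to G and K/D^{n+1} -> 0.  Since d < D this is an
   eventual contraction, so m_n -> 0 and limsup A_n/D^n <= alpha G. *)

(* The complex norm Cnorm agrees with Coquelicot's modulus, which gives
   us its multiplicativity and the triangle inequality. *)
Lemma Cnorm_Cmod (a : Cx) : Cnorm a = Cmod a.
Proof. unfold Cnorm, Cmod. f_equal. simpl. ring. Qed.

Lemma Cnorm_ge0 (a : Cx) : 0 <= Cnorm a.
Proof. rewrite Cnorm_Cmod. apply Cmod_ge_0. Qed.

Lemma Cnorm_mul (a b : Cx) : Cnorm (Cmul a b) = Cnorm a * Cnorm b.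
Proof. rewrite !Cnorm_Cmod. exact (Cmod_mult a b). Qed.

Lemma Cnorm_pow (a : Cx) (n : nat) : Cnorm (Cpow a n) = Cnorm a ^ n.
Proof.
  induction n as [|n IH]; simpl.
  - rewrite Cnorm_Cmod. exact Cmod_1.
  - rewrite Cnorm_mul, IH. reflexivity.
Qed.

Lemma Cnorm_Czero : Cnorm Czero = 0.
Proof. rewrite Cnorm_Cmod. exact Cmod_0. Qed.

Lemma Csum_bound (f : nat -> Cx) (n : nat) :
  Cnorm (Csum f n) <= sum_f_R0 (fun k => Cnorm (f k)) n.
Proof.
  induction n as [|n IH]; simpl.
  - lra.
  - rewrite Cnorm_Cmod. eapply Rle_trans; [apply Cmod_triangle|].
    rewrite <- !Cnorm_Cmod. lra.
Qed.

Lemma exp_le_compat (x y : R) : x <= y -> exp x <= exp y.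
Proof.
  intros Hxy. destruct (Rle_lt_or_eq_dec _ _ Hxy) as [H|H].
  - left. apply exp_increasing, H.
  - subst. lra.
Qed.

Lemma exp_nat_mul (k : nat) (L : R) : exp (INR k * L) = exp L ^ k.
Proof.
  induction k as [|k IH].
  - simpl. rewrite Rmult_0_l, exp_0. reflexivity.
  - rewrite S_INR, Rmult_plus_distr_r, Rmult_1_l, exp_plus, IH. simpl. ring.
Qed.

Lemma logplus_ge0 (x : R) : 0 <= logplus x.
Proof. apply Rmax_l. Qed.

Lemma le_exp_logplus (x : R) : 0 <= x -> x <= exp (logplus x).
Proof.
  intros Hx. unfold logplus. destruct (Rlt_dec 0 x) as [H|H].
  - rewrite <- (exp_ln x) at 1 by exact H.
    apply exp_le_compat, Rmax_r.
  - pose proof (exp_pos (Rmax 0 (ln x))). lra.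
Qed.

Lemma logplus_le_ln (y Y : R) : y <= Y -> 1 <= Y -> logplus y <= ln Y.
Proof.
  intros Hy HY. unfold logplus. apply Rmax_lub.
  - rewrite <- ln_1. apply ln_le; lra.
  - destruct (Rlt_dec 0 y) as [H|H].
    + apply ln_le; lra.
    + unfold ln at 1. destruct (Rlt_dec 0 y); [contradiction|].
      rewrite <- ln_1. apply ln_le; lra.
Qed.

Lemma monomial_norm_bound (z w : Cx) (i j : nat) :
  Cnorm (Cpow z i) * Cnorm (Cpow w j)
  <= exp (INR i * logplus (Cnorm z) + INR j * logplus (Cnorm w)).
Proof.
  assert (Hpow : forall (a : Cx) (k : nat),
             Cnorm (Cpow a k) <= exp (INR k * logplus (Cnorm a))).
  { intros a k. rewrite Cnorm_pow, exp_nat_mul.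
    apply pow_incr. split; [apply Cnorm_ge0|]. apply le_exp_logplus, Cnorm_ge0. }
  rewrite exp_plus. apply Rmult_le_compat; try apply Cnorm_ge0; apply Hpow.
Qed.

Definition coeff_log_mass (c : nat -> nat -> Cx) (N d : nat) : R :=
  ln (1 + sum_f_R0 (fun i => sum_f_R0 (fun j => Cnorm (c i j)) d) N).

Lemma qeval_logplus_bound (c : nat -> nat -> Cx) (N d : nat) (z w : Cx) (T : R) :
  0 <= T ->
  (forall i j, c i j <> Czero ->
     INR i * logplus (Cnorm z) + INR j * logplus (Cnorm w) <= T) ->
  logplus (Cnorm (qeval c N d z w)) <= coeff_log_mass c N d + T.
Proof.
  intros HT Hc.
  set (S := sum_f_R0 (fun i => sum_f_R0 (fun j => Cnorm (c i j)) d) N).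
  assert (HS : 0 <= S).
  { apply cond_pos_sum. intro i. apply cond_pos_sum. intro j. apply Cnorm_ge0. }
  assert (Hterm : forall i j, Cnorm (Cmul (c i j) (Cmul (Cpow z i) (Cpow w j)))
                              <= Cnorm (c i j) * exp T).
  { intros i j. rewrite !Cnorm_mul.
    destruct (Req_dec_T (Cnorm (c i j)) 0) as [H0|H0].
    - rewrite H0. pose proof (exp_pos T). lra.
    - assert (Hne : c i j <> Czero) by (intros E; apply H0; rewrite E; apply Cnorm_Czero).
      apply Rmult_le_compat_l; [apply Cnorm_ge0|].
      eapply Rle_trans; [apply monomial_norm_bound|]. apply exp_le_compat, Hc, Hne. }
  assert (Hq : Cnorm (qeval c N d z w) <= S * exp T).
  { unfold qeval. eapply Rle_trans; [apply Csum_bound|].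
    unfold S. rewrite Rmult_comm, scal_sum. apply sum_Rle. intros i _.
    eapply Rle_trans; [apply Csum_bound|].
    rewrite Rmult_comm, scal_sum. apply sum_Rle. intros j _. apply Hterm. }
  assert (HE : 1 <= exp T) by (rewrite <- exp_0; apply exp_le_compat; lra).
  unfold coeff_log_mass. fold S.
  rewrite <- (ln_exp T). rewrite <- ln_mult by (pose proof (exp_pos T); lra).
  apply logplus_le_ln; nra.
Qed.

Lemma monomial_exponent_bound (i j d : nat) (D alpha A B : R) :
  0 <= A -> 0 <= B -> (j <= d)%nat -> INR d < D ->
  INR i / (D - INR j) <= alpha ->
  INR i * B + INR j * A <= alpha * D * B + INR d * Rmax 0 (A - alpha * B).
Proof.
  intros HA HB Hj HdD Hi.
  set (X := Rmax 0 (A - alpha * B)).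
  assert (HX0 : 0 <= X) by apply Rmax_l.
  assert (HXA : A - alpha * B <= X) by apply Rmax_r.
  assert (Hj1 : INR j <= INR d) by (apply le_INR; exact Hj).
  assert (Hj0 : 0 <= INR j) by apply pos_INR.
  assert (Hi' : INR i <= alpha * (D - INR j)).
  { replace (INR i) with (INR i / (D - INR j) * (D - INR j)) by (field; lra).
    apply Rmult_le_compat_r; lra. }
  assert (INR i * B <= alpha * (D - INR j) * B) by (apply Rmult_le_compat_r; lra).
  assert (INR j * (A - alpha * B) <= INR j * X) by (apply Rmult_le_compat_l; lra).
  assert (INR j * X <= INR d * X) by (apply Rmult_le_compat_r; lra).
  nra.
Qed.

Lemma qeval_step_bound (c : nat -> nat -> Cx) (N d delta : nat) (alpha : R) (z w : Cx) :
  (forall i j, (d < j)%nat -> c i j = Czero) ->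
  (forall i j, c i j <> Czero -> INR i / INR (delta - j) <= alpha) ->
  0 <= alpha -> (d < delta)%nat ->
  logplus (Cnorm (qeval c N d z w))
  <= coeff_log_mass c N d + (alpha * INR delta * logplus (Cnorm z)
     + INR d * Rmax 0 (logplus (Cnorm w) - alpha * logplus (Cnorm z))).
Proof.
  intros Hsupp Halpha Ha0 Hdd.
  set (A := logplus (Cnorm w)). set (B := logplus (Cnorm z)).
  assert (HA : 0 <= A) by apply logplus_ge0.
  assert (HB : 0 <= B) by apply logplus_ge0.
  apply qeval_logplus_bound.
  - assert (0 <= alpha * INR delta * B)
      by (apply Rmult_le_pos; [apply Rmult_le_pos; [|apply pos_INR]|]; assumption).
    assert (0 <= INR d * Rmax 0 (A - alpha * B)) by
      (apply Rmult_le_pos; [apply pos_INR|apply Rmax_l]).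
    lra.
  - intros i j Hne. fold A B.
    assert (Hj : (j <= d)%nat).
    { destruct (Nat.le_gt_cases j d) as [H|H]; [exact H|].
      exfalso. exact (Hne (Hsupp i j H)). }
    specialize (Halpha i j Hne). rewrite minus_INR in Halpha by lia.
    apply monomial_exponent_bound; auto. apply lt_INR; exact Hdd.
Qed.

Lemma geometric_recursion_bound (m : nat -> R) (rho tau : R) (N1 : nat) :
  0 <= rho -> rho < 1 -> 0 <= tau ->
  (forall n, (N1 <= n)%nat -> m (S n) <= rho * m n + tau) ->
  forall k, m (N1 + k)%nat <= rho ^ k * m N1 + tau / (1 - rho).
Proof.
  intros H0 H1 Ht Hs k. induction k as [|k IH].
  - rewrite Nat.add_0_r. simpl.
    assert (0 <= tau / (1 - rho)) by (apply Rdiv_le_0_compat; lra).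
    lra.
  - rewrite Nat.add_succ_r. eapply Rle_trans; [apply Hs; lia|].
    assert (E : rho * (tau / (1 - rho)) + tau = tau / (1 - rho)) by (field; lra).
    simpl. apply Rmult_le_compat_l with (r := rho) in IH; auto. nra.
Qed.

Lemma limsup_zero_of_contraction (m : nat -> R) (rho : R) :
  0 <= rho -> rho < 1 -> (forall n, 0 <= m n) ->
  (forall eta, eta > 0 ->
     exists M, forall n, (M <= n)%nat -> m (S n) <= rho * m n + eta) ->
  limsup_le m 0.
Proof.
  intros Hr0 Hr1 Hm Hstep eps Heps.
  set (tau := eps * (1 - rho) / 2).
  assert (Htau : tau > 0) by (unfold tau; apply Rdiv_lt_0_compat; nra).
  destruct (Hstep tau Htau) as [M HM].
  pose proof (geometric_recursion_bound m rho tau M Hr0 Hr1 ltac:(lra) HM) as Hgeo.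
  assert (Htr : tau / (1 - rho) = eps / 2) by (unfold tau; field; lra).
  set (y := eps / (2 * (m M + 1))).
  assert (HmM := Hm M).
  assert (Hy : 0 < y) by (unfold y; apply Rdiv_lt_0_compat; lra).
  assert (Hy2 : y * (m M + 1) = eps / 2) by (unfold y; field; lra).
  destruct (pow_lt_1_zero rho ltac:(rewrite Rabs_right; lra) y Hy) as [N3 HN3].
  exists (M + N3)%nat. intros n Hn.
  replace n with (M + (n - M))%nat by lia.
  specialize (HN3 (n - M)%nat ltac:(lia)).
  rewrite Rabs_right in HN3 by (apply Rle_ge, pow_le; lra).
  specialize (Hgeo (n - M)%nat).
  assert (rho ^ (n - M) * m M <= y * m M) by (apply Rmult_le_compat_r; lra).
  nra.
Qed.

Lemma limsup_le_of_sum (u g m : nat -> R) (alpha G : R) :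
  0 <= alpha -> Un_cv g G -> limsup_le m 0 ->
  (forall n, u n <= alpha * g n + m n) ->
  limsup_le u (alpha * G).
Proof.
  intros Ha Hg Hm Hu eps Heps.
  assert (He : eps / (2 * (1 + alpha)) > 0) by (apply Rdiv_lt_0_compat; lra).
  destruct (Hg _ He) as [N1 HN1].
  destruct (Hm (eps / 2) ltac:(lra)) as [N2 HN2].
  exists (Nat.max N1 N2). intros n Hn.
  specialize (HN1 n ltac:(lia)). specialize (HN2 n ltac:(lia)).
  unfold R_dist in HN1. apply Rabs_def2 in HN1 as [HN1 _].
  assert (alpha * (g n - G) <= alpha * (eps / (2 * (1 + alpha))))
    by (apply Rmult_le_compat_l; lra).
  assert (alpha * (eps / (2 * (1 + alpha))) <= eps / 2).
  { replace (eps / 2) with ((1 + alpha) * (eps / (2 * (1 + alpha)))) by (field; lra).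
    apply Rmult_le_compat_r; lra. }
  specialize (Hu n). nra.
Qed.

Lemma limsup_of_perturbed_contraction (u g r : nat -> R) (rho alpha G : R) :
  0 <= rho -> rho < 1 -> 0 <= alpha -> Un_cv g G -> Un_cv r 0 ->
  (forall n, u (S n) <= r n + alpha * g n + rho * Rmax 0 (u n - alpha * g n)) ->
  limsup_le u (alpha * G).
Proof.
  intros Hr0 Hr1 Ha Hg Hrc Hrec.
  set (m := fun n => Rmax 0 (u n - alpha * g n)).
  apply (limsup_le_of_sum u g m); auto.
  - apply (limsup_zero_of_contraction m rho); auto.
    { intro n. apply Rmax_l. }
    intros eta Heta.
    set (e := eta / (1 + 2 * alpha)).
    assert (He : e > 0) by (apply Rdiv_lt_0_compat; lra).
    assert (He2 : e * (1 + 2 * alpha) = eta) by (unfold e; field; lra).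
    destruct (Hg e He) as [N1 HN1]. destruct (Hrc e He) as [N2 HN2].
    exists (Nat.max N1 N2). intros n Hn. unfold m.
    assert (Hrn : Rabs (r n - 0) < e) by (apply HN2; lia).
    assert (Hgn : Rabs (g n - G) < e) by (apply HN1; lia).
    assert (HgSn : Rabs (g (S n) - G) < e) by (apply HN1; lia).
    apply Rabs_def2 in Hrn, Hgn, HgSn.
    assert (alpha * (g n - g (S n)) <= alpha * (2 * e)) by (apply Rmult_le_compat_l; lra).
    pose proof (Rmax_l 0 (u n - alpha * g n)).
    specialize (Hrec n).
    apply Rmax_lub; nra.
  - intro n. unfold m. pose proof (Rmax_r 0 (u n - alpha * g n)). lra.
Qed.

Lemma normalized_recursion (a b : nat -> R) (K alpha D d : R) (n : nat) :
  0 < D ->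
  a (S n) <= K + (alpha * D * b n + d * Rmax 0 (a n - alpha * b n)) ->
  a (S n) / D ^ S n <= K / D ^ S n + alpha * (b n / D ^ n)
                       + d / D * Rmax 0 (a n / D ^ n - alpha * (b n / D ^ n)).
Proof.
  intros HD Hrec.
  assert (HDn : 0 < / D ^ n) by (apply Rinv_0_lt_compat, pow_lt; lra).
  replace (a n / D ^ n - alpha * (b n / D ^ n)) with (/ D ^ n * (a n - alpha * b n))
    by (field; apply pow_nonzero; lra).
  replace (Rmax 0 (/ D ^ n * (a n - alpha * b n))) with (/ D ^ n * Rmax 0 (a n - alpha * b n))
    by (unfold Rmax; destruct (Rle_dec 0 _), (Rle_dec 0 _); nra).
  replace (K / D ^ S n + alpha * (b n / D ^ n)
           + d / D * (/ D ^ n * Rmax 0 (a n - alpha * b n)))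
    with ((K + (alpha * D * b n + d * Rmax 0 (a n - alpha * b n))) / D ^ S n)
    by (simpl; field; split; [apply pow_nonzero|]; lra).
  apply Rmult_le_compat_r; [|exact Hrec].
  left. apply Rinv_0_lt_compat, pow_lt. lra.
Qed.

Lemma const_div_pow_cv_0 (K D : R) : 1 < D -> Un_cv (fun n => K / D ^ S n) 0.
Proof.
  intros HD. apply is_lim_seq_Reals.
  assert (Hgeom : is_lim_seq (fun n => K * (/ D) ^ S n) (Rbar_mult K 0)).
  { apply is_lim_seq_scal_l. apply (is_lim_seq_incr_1 (fun n => (/ D) ^ n)).
    apply is_lim_seq_geom. rewrite Rabs_right.
    - rewrite <- Rinv_1. apply Rinv_lt_contravar; lra.
    - left. apply Rinv_0_lt_compat. lra. }
  rewrite Rbar_mult_0_r in Hgeom.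
  eapply is_lim_seq_ext; [|exact Hgeom].
  intro n. simpl. rewrite pow_inv. unfold Rdiv. rewrite Rinv_mult. ring.
Qed.

(* alpha >= 0, witnessed by the leading monomial z^gamma w^d of q. *)
Lemma alpha_nonneg (c : nat -> nat -> Cx) (gamma d delta : nat) (alpha : R) :
  (d < delta)%nat -> c gamma d = Cone -> is_alpha c delta alpha -> 0 <= alpha.
Proof.
  intros Hdd Hlead [Hbound _].
  assert (Hne : c gamma d <> Czero).
  { rewrite Hlead. unfold Cone, Czero. intro H. injection H. lra. }
  eapply Rle_trans; [|exact (Hbound gamma d Hne)].
  apply Rdiv_le_0_compat; [apply pos_INR|]. apply lt_0_INR. lia.
Qed.

(* The upper bound holds for every z whose normalized escape rate converges. *)
Theorem proposition4p1
  (delta : nat) (pl : list Cx)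
  (c : nat -> nat -> Cx) (N d gamma : nat) (alpha : R)
  (Hdelta : (2 <= delta)%nat) (Hp : monic_of_degree pl delta)
  (Hd : (2 <= d)%nat)
  (Hsupp : forall i j, (N < i)%nat \/ (d < j)%nat -> c i j = Czero)
  (Hb_lead : c gamma d = Cone)
  (Hb_monic : forall i, (gamma < i)%nat -> c i d = Czero)
  (Hdd : (d < delta)%nat)
  (Halpha : is_alpha c delta alpha) :
  forall z w : Cx, in_escape_set pl z ->
  forall G : R, Un_cv (fun n => logplus (Cnorm (piter pl n z)) / INR delta ^ n) G ->
  limsup_le (fun n => logplus (Cnorm (Qiter pl c N d n z w)) / INR delta ^ n) (alpha * G).
Proof.
  intros z w _ G HG.
  set (D := INR delta).
  assert (HD : 1 < D) by (unfold D; apply lt_1_INR; lia).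
  assert (HD0 : 0 < D) by lra.
  assert (HdD : INR d < D) by (unfold D; apply lt_INR; lia).
  assert (Ha0 : 0 <= alpha) by exact (alpha_nonneg c gamma d delta alpha Hdd Hb_lead Halpha).
  apply limsup_of_perturbed_contraction
    with (g := fun n => logplus (Cnorm (piter pl n z)) / D ^ n)
         (r := fun n => coeff_log_mass c N d / D ^ S n) (rho := INR d / D); auto.
  - apply Rdiv_le_0_compat; [apply pos_INR | exact HD0].
  - apply (Rdiv_lt_1 _ _ HD0), HdD.
  - apply const_div_pow_cv_0. exact HD.
  - intro n.
    apply (normalized_recursion (fun k => logplus (Cnorm (Qiter pl c N d k z w)))
                                (fun k => logplus (Cnorm (piter pl k z)))); [exact HD0|].
    apply qeval_step_bound; [| apply Halpha | exact Ha0 | exact Hdd].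
    intros i j Hj. apply Hsupp. right. exact Hj.
Qed.
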